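(* For every $J\subseteq[n]$, the hyperplane arrangement $\mathcal B_J$ is free.
   Context: A hyperplane arrangement in $\mathbb C^n$ is a finite set of linear hyperplanes; $H_\alpha$ is the zero set of a nonzero linear form $\alpha$. $\operatorname{Der}(\mathbb C[\mathbf x_n])=\bigoplus_{i=1}^n\mathbb C[\mathbf x_n]\partial_i$ is the module of derivations of $\mathbb C[x_1,\dots,x_n]$, and for an arrangement $\mathcal A$, $\operatorname{Der}(\mathcal A)=\{\delta\in\operatorname{Der}(\mathbb C[\mathbf x_n]):\alpha\mid\delta(\alpha)\text{ for all }H_\alpha\in\mathcal A\}$. $\mathcal A$ is free if $\operatorname{Der}(\mathcal A)$ is a free $\mathbb C[\mathbf x_n]$-module. For $J\subseteq[n]$, $\mathcal B_J$ is the arrangement consisting of $H_{x_j}$ for $j\in[n]\setminus J$ together with $H_{x_j-x_i}$ and $H_{x_j+x_i}$ for all $j\in[n]\setminus J$ and $j<i\le n$. *)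

From HB Require Import structures.
From mathcomp Require Import all_boot all_order all_algebra.
From mathcomp Require Import complex.
From mathcomp Require Import Rstruct.
From mathcomp Require Import mpoly.
From Stdlib Require Import Rdefinitions.

Set Implicit Arguments.
Unset Strict Implicit.
Unset Printing Implicit Defensive.

Import GRing.Theory.
Local Open Scope ring_scope.

Definition CC : Type := (complex Rdefinitions.R).

Notation Cpoly n := {mpoly CC[n]}.

(* A linear form alpha = sum_i a_i x_i on C^n is given by its coefficient
   vector a : 'I_n -> C; the hyperplane H_alpha is its zero set.  A (central)
   hyperplane arrangement is given by a list of defining linear forms. *)
Definition linform (n : nat) := {ffun 'I_n -> CC}.

Definition lin_poly (n : nat) (a : linform n) : Cpoly n :=
  \sum_(i < n) a i *: 'X_i.

(* A derivation delta = sum_i f_i d_i of C[x_1..x_n] is given by (f_i)_i. *)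
Definition derivation (n : nat) := 'I_n -> Cpoly n.

(* delta(alpha) for alpha linear: sum_i a_i f_i  ( = sum_i f_i d_i(alpha) ). *)
Definition der_app (n : nat) (d : derivation n) (a : linform n) : Cpoly n :=
  \sum_(i < n) a i *: d i.

Definition pdvd (n : nat) (p q : Cpoly n) : Prop := exists g : Cpoly n, q = g * p.

Definition in_Der (n : nat) (A : seq (linform n)) (d : derivation n) : Prop :=
  forall a, a \in A -> pdvd (lin_poly a) (der_app d a).

Definition free_arr (n : nat) (A : seq (linform n)) : Prop :=
  exists (m : nat) (b : 'I_m -> derivation n),
    (forall k, in_Der A (b k)) /\
    (forall d, in_Der A d ->
       exists c : 'I_m -> Cpoly n, forall i, d i = \sum_(k < m) c k * b k i) /\
    (forall c : 'I_m -> Cpoly n,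
       (forall i, \sum_(k < m) c k * b k i = 0) -> forall k, c k = 0).

Definition xform (n : nat) (j : 'I_n) : linform n := [ffun k => (k == j)%:R].
Definition minus_form (n : nat) (j i : 'I_n) : linform n :=
  [ffun k => (k == j)%:R - (k == i)%:R].
Definition plus_form (n : nat) (j i : 'I_n) : linform n :=
  [ffun k => (k == j)%:R + (k == i)%:R].

(* B_J : H_{x_j} (j notin J), H_{x_j - x_i}, H_{x_j + x_i} (j notin J, j < i). *)
Definition B_arr (n : nat) (J : {set 'I_n}) : seq (linform n) :=
  [seq xform j | j <- enum 'I_n & j \notin J] ++
  flatten [seq flatten [seq [:: minus_form j i; plus_form j i]
                         | i <- enum 'I_n & ltn (nat_of_ord j) (nat_of_ord i)]
          | j <- enum 'I_n & j \notin J].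

(* Der(B_J) has the explicit triangular basis theta_k (k in [n]):
   theta_k(x_i) = G_k(x_i) for i = k and, when k is not in J, for i > k, and 0
   otherwise, where G_k(t) = t^[k notin J] * prod_(a < k, a notin J) (t^2 - x_a^2).
   Each theta_k lies in Der(B_J): G_k vanishes at t = +-x_a for the relevant a,
   G_k(u) - G_k(v) is divisible by u - v, and G_k is odd when k is not in J.
   The coefficient matrix is triangular with nonzero diagonal G_k(x_k), which
   gives independence.  Conversely, if delta in Der(B_J) kills x_i for i < k, then
   the pairwise coprime linear forms x_k (if k notin J) and x_k -+ x_a
   (a < k, a notin J) all divide delta(x_k), hence so does G_k(x_k); subtracting
   a multiple of theta_k pushes the first nonzero coordinate of delta up. *)

From mathcomp Require Import all_boot all_order all_algebra.
From mathcomp Require Import complex Rstruct mpoly ring.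

Set Implicit Arguments.
Unset Strict Implicit.
Unset Printing Implicit Defensive.

Import GRing.Theory Num.Theory.
Local Open Scope ring_scope.

Section Divisibility.
Variable R : comPzRingType.

Definition dvdr (x y : R) : Prop := exists g, y = g * x.

Lemma dvdr0 (x : R) : dvdr x 0.
Proof. by exists 0; rewrite mul0r. Qed.

Lemma dvdrr (x : R) : dvdr x x.
Proof. by exists 1; rewrite mul1r. Qed.

Lemma dvdrD (x y z : R) : dvdr x y -> dvdr x z -> dvdr x (y + z).
Proof. by move=> [a ->] [b ->]; exists (a + b); rewrite mulrDl. Qed.

Lemma dvdrN (x y : R) : dvdr x y -> dvdr x (- y).
Proof. by move=> [a ->]; exists (- a); rewrite mulNr. Qed.

Lemma dvdNr (x y : R) : dvdr (- x) y -> dvdr x y.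
Proof. by move=> [a ->]; exists (- a); rewrite mulrN mulNr. Qed.

Lemma dvdrB (x y z : R) : dvdr x y -> dvdr x z -> dvdr x (y - z).
Proof. by move=> hy /dvdrN; apply: dvdrD. Qed.

Lemma dvdr_mull (x y z : R) : dvdr x y -> dvdr x (z * y).
Proof. by move=> [a ->]; exists (z * a); rewrite mulrA. Qed.

Lemma dvdr_mulr (x y z : R) : dvdr x y -> dvdr x (y * z).
Proof. by rewrite mulrC; apply: dvdr_mull. Qed.

Lemma dvdr_sum (x : R) (I : Type) (r : seq I) (P : pred I) (F : I -> R) :
  (forall i, P i -> dvdr x (F i)) -> dvdr x (\sum_(i <- r | P i) F i).
Proof. by move=> h; apply: big_ind => //; [apply: dvdr0 | apply: dvdrD]. Qed.

Lemma dvdr_subM (x a b c d : R) :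
  dvdr x (a - b) -> dvdr x (c - d) -> dvdr x (a * c - b * d).
Proof.
move=> hab hcd; have -> : a * c - b * d = (a - b) * c + b * (c - d) by ring.
by apply: dvdrD; [apply: dvdr_mulr | apply: dvdr_mull].
Qed.

Lemma dvdr_subX (x a b : R) e : dvdr x (a - b) -> dvdr x (a ^+ e - b ^+ e).
Proof.
move=> h; elim: e => [|e IH]; first by rewrite !expr0 subrr; apply: dvdr0.
by rewrite !exprS; apply: dvdr_subM.
Qed.

Lemma dvdr_sub_prod (x : R) (I : Type) (r : seq I) (P : pred I) (F G : I -> R) :
  (forall i, P i -> dvdr x (F i - G i)) ->
  dvdr x (\prod_(i <- r | P i) F i - \prod_(i <- r | P i) G i).
Proof.
move=> h; apply: (big_ind2 (fun y z => dvdr x (y - z))) => //.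
  by rewrite subrr; apply: dvdr0.
by move=> *; apply: dvdr_subM.
Qed.

End Divisibility.

Section Substitution.
Variables (R : idomainType) (n : nat) (k : 'I_n).
Implicit Types (c p D : {mpoly R[n]}).

Definition subst_var c : n.-tuple {mpoly R[n]} :=
  [tuple if i == k then c else 'X_i | i < n].

(* [c] does not involve X_k, phrased as invariance under substituting for X_k. *)
Definition var_free c := forall c', c \mPo subst_var c' = c.

Lemma subst_varX c i : 'X_i \mPo subst_var c = if i == k then c else 'X_i.
Proof. by rewrite comp_mpolyXU -tnth_nth tnth_mktuple. Qed.

Lemma var_freeX i : i != k -> var_free 'X_i.
Proof. by move=> ik c; rewrite subst_varX (negbTE ik). Qed.

Lemma var_freeN c : var_free c -> var_free (- c).
Proof. by move=> hc c'; rewrite rmorphN /= hc. Qed.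

Lemma var_free0 : var_free 0.
Proof. by move=> c; rewrite rmorph0. Qed.

Lemma Xsub_neq0 c : var_free c -> 'X_k - c != 0.
Proof.
move=> hc; rewrite subr_eq0; apply/negP => /eqP hX.
have h1 := hc 1; have h0 := hc 0; rewrite -hX !subst_varX eqxx in h1 h0.
by have /eqP := oner_neq0 {mpoly R[n]}; apply; rewrite h1 -h0.
Qed.

Lemma dvdr_Xsub_subst c p : dvdr ('X_k - c) (p - (p \mPo subst_var c)).
Proof.
rewrite {1}(mpolyE p) comp_mpolyEX -sumrB; apply: dvdr_sum => m _.
rewrite -scalerBr -mul_mpolyC; apply: dvdr_mull.
rewrite comp_mpolyX [X in dvdr _ (X - _)]mpolyXE_id.
apply: dvdr_sub_prod => i _; apply: dvdr_subX.
rewrite tnth_mktuple; case: eqP => [->|_]; first exact: dvdrr.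
by rewrite subrr; apply: dvdr0.
Qed.

Lemma dvdr_XsubP c p : var_free c ->
  dvdr ('X_k - c) p <-> p \mPo subst_var c = 0.
Proof.
move=> hc; split; last by move=> h; have := dvdr_Xsub_subst c p; rewrite h subr0.
by move=> [g ->]; rewrite rmorphM rmorphB /= subst_varX eqxx hc subrr mulr0.
Qed.

(* X_k - c is prime, and coprime to any D not vanishing at X_k = c. *)
Lemma dvdr_mul_Xsub c D p : var_free c -> D \mPo subst_var c != 0 ->
  dvdr D p -> dvdr ('X_k - c) p -> dvdr (D * ('X_k - c)) p.
Proof.
move=> hc hD [q ->] /(dvdr_XsubP _ hc); rewrite rmorphM /= => /eqP.
rewrite mulf_eq0 (negbTE hD) orbF => /eqP /(dvdr_XsubP _ hc) [g ->].
by exists g; rewrite mulrAC -mulrA.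
Qed.

Lemma dvdr_prod_Xsub (cs : seq {mpoly R[n]}) p : uniq cs ->
  {in cs, forall c, var_free c} -> {in cs, forall c, dvdr ('X_k - c) p} ->
  dvdr (\prod_(c <- cs) ('X_k - c)) p.
Proof.
elim: cs => [_ _ _|c cs IH /= /andP [ccs ucs] hfree hdvd].
  by rewrite big_nil; exists p; rewrite mulr1.
have hc := hfree c (mem_head c cs).
rewrite big_cons mulrC; apply: dvdr_mul_Xsub => //.
- rewrite rmorph_prod prodf_seq_neq0; apply/allP => c' c'cs /=.
  rewrite rmorphB /= subst_varX eqxx (hfree c') ?inE ?c'cs ?orbT // subr_eq0.
  by apply: contraNneq ccs => ->.
- by apply: IH => // c' c'cs; [apply: hfree | apply: hdvd]; rewrite inE c'cs orbT.
- exact: hdvd (mem_head c cs).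
Qed.

End Substitution.

Section LinearForms.
Variable n : nat.
Implicit Types (d : derivation n) (i j : 'I_n).

Lemma sum_delta (R : pzRingType) (V : lmodType R) j (F : 'I_n -> V) :
  \sum_(i < n) (i == j)%:R *: F i = F j.
Proof.
rewrite (bigD1 j) //= eqxx scale1r big1 ?addr0 // => i /negbTE ->.
by rewrite scale0r.
Qed.

Lemma lin_polyE (a : linform n) : lin_poly a = der_app (fun i => 'X_i) a.
Proof. by []. Qed.

Lemma der_app_xform d j : der_app d (xform j) = d j.
Proof. by rewrite /der_app -[RHS]sum_delta; apply: eq_bigr => i _; rewrite ffunE. Qed.

Lemma der_app_minus d j i : der_app d (minus_form j i) = d j - d i.
Proof.
rewrite /der_app -(sum_delta j d) -(sum_delta i d) -sumrB; apply: eq_bigr => l _.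
by rewrite ffunE scalerBl.
Qed.

Lemma der_app_plus d j i : der_app d (plus_form j i) = d j + d i.
Proof.
rewrite /der_app -(sum_delta j d) -(sum_delta i d) -big_split; apply: eq_bigr => l _.
by rewrite ffunE scalerDl.
Qed.

Lemma in_Der_subr_mul (A : seq (linform n)) d e (c : Cpoly n) :
  in_Der A d -> in_Der A e -> in_Der A (fun i => d i - c * e i).
Proof.
move=> hd he a aA; rewrite /pdvd /der_app.
under eq_bigr do rewrite scalerBr scalerAr.
by rewrite sumrB -mulr_sumr; apply: dvdrB; [apply: hd | apply/dvdr_mull/he].
Qed.

End LinearForms.

Section Arrangement.
Variables (n : nat) (J : {set 'I_n}).

Lemma B_arrP a : a \in B_arr J ->
  (exists2 j, j \notin J & a = xform j) \/
  (exists j i : 'I_n,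
     [/\ j \notin J, (j < i)%N & a = minus_form j i \/ a = plus_form j i]).
Proof.
rewrite mem_cat => /orP [/mapP [j]|/flatten_mapP [j]].
  by rewrite mem_filter => /andP [jJ _] ->; left; exists j.
rewrite mem_filter => /andP [jJ _] /flattenP [_ /mapP [i + ->]].
rewrite mem_filter => /andP [ji _].
by rewrite !inE => /orP [] /eqP ->; right; exists j, i; split; auto.
Qed.

Lemma xform_in_B_arr (j : 'I_n) : j \notin J -> xform j \in B_arr J.
Proof. by move=> jJ; rewrite mem_cat map_f // mem_filter jJ mem_enum. Qed.

Lemma minus_plus_in_B_arr (j i : 'I_n) : j \notin J -> (j < i)%N ->
  minus_form j i \in B_arr J /\ plus_form j i \in B_arr J.
Proof.
move=> jJ ji.
have jsel : j \in [seq j <- enum 'I_n | j \notin J] by rewrite mem_filter jJ mem_enum.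
have isel : i \in [seq i : 'I_n <- enum 'I_n | (j < i)%N].
  by rewrite mem_filter ji mem_enum.
by split; rewrite mem_cat; apply/orP; right; apply/flatten_mapP; exists j => //;
  apply/flatten_mapP; exists i; rewrite // !inE eqxx ?orbT.
Qed.

End Arrangement.

Section VariableSeparation.
Variable n : nat.

Lemma X_inj : injective (fun a : 'I_n => 'X_a : Cpoly n).
Proof.
move=> a b /(congr1 (meval (fun i : 'I_n => (i == a)%:R))); rewrite !mevalXU eqxx.
by case: (eqVneq b a) => // _ /eqP; rewrite oner_eq0.
Qed.

Lemma oppX_inj : injective (fun a : 'I_n => - 'X_a : Cpoly n).
Proof. by move=> a b /oppr_inj /X_inj. Qed.

Lemma X_neq0 (a : 'I_n) : 'X_a != 0 :> Cpoly n.
Proof.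
apply/eqP => /(congr1 (meval (fun i : 'I_n => (i == a)%:R))).
by rewrite mevalXU meval0 eqxx => /eqP; rewrite oner_eq0.
Qed.

Lemma X_neq_oppX (a b : 'I_n) : 'X_a != - 'X_b :> Cpoly n.
Proof.
apply/eqP => /(congr1 (meval (fun i : 'I_n => (i == a)%:R))).
by rewrite mevalN !mevalXU eqxx => /eqP; rewrite -subr_eq0 opprK addrC natr1 pnatr_eq0.
Qed.

End VariableSeparation.

Definition in_span (n m : nat) (b : 'I_m -> derivation n) (d : derivation n) : Prop :=
  exists c : 'I_m -> Cpoly n, forall i, d i = \sum_(k < m) c k * b k i.

Lemma in_span_subr_mul n m (b : 'I_m -> derivation n) d k (c0 : Cpoly n) :
  in_span b (fun i => d i - c0 * b k i) -> in_span b d.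
Proof.
move=> [c hc]; exists (fun l => c l + (if l == k then c0 else 0)) => i.
under eq_bigr do rewrite mulrDl.
rewrite big_split /= -hc (bigD1 k) //= eqxx big1 ?addr0 ?subrK // => l /negbTE ->.
by rewrite mul0r.
Qed.

Section Basis.
Variables (n : nat) (J : {set 'I_n}).
Implicit Types (i j k a : 'I_n) (t u v D : Cpoly n) (d : derivation n).

Definition Blower k : seq 'I_n :=
  [seq a : 'I_n <- index_enum 'I_n | (a < k)%N && (a \notin J)].

Definition Bpoly k t : Cpoly n :=
  (if k \in J then 1 else t) * \prod_(a <- Blower k) (t ^+ 2 - 'X_a ^+ 2).

Definition Bsupp k i : bool := (i == k) || (k \notin J) && (k < i)%N.

Definition Bbasis k : derivation n := fun i => if Bsupp k i then Bpoly k 'X_i else 0.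

Lemma Blower_uniq k : uniq (Blower k).
Proof. exact/filter_uniq/index_enum_uniq. Qed.

Lemma mem_Blower k a : (a \in Blower k) = (a < k)%N && (a \notin J).
Proof. by rewrite mem_filter mem_index_enum andbT. Qed.

Lemma Blower_neq k a : a \in Blower k -> a != k.
Proof. by rewrite mem_Blower => /andP [ak _]; rewrite -(inj_eq val_inj) neq_ltn ak. Qed.

Lemma dvdr_Bpoly_sub k D u v : dvdr D (u - v) -> dvdr D (Bpoly k u - Bpoly k v).
Proof.
move=> h; apply: dvdr_subM.
  by case: (k \in J) => //; rewrite subrr; apply: dvdr0.
apply: dvdr_sub_prod => a _.
have -> : u ^+ 2 - 'X_a ^+ 2 - (v ^+ 2 - 'X_a ^+ 2) = u ^+ 2 - v ^+ 2 by ring.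
exact: dvdr_subX.
Qed.

Lemma BpolyN k t : k \notin J -> Bpoly k (- t) = - Bpoly k t.
Proof.
move=> kJ; rewrite /Bpoly (negbTE kJ) mulNr; congr (- (_ * _)).
by apply: eq_bigr => a _; rewrite sqrrN.
Qed.

Lemma dvdr_Bpoly_X k j i : j \in Blower k ->
  dvdr ('X_j - 'X_i) (Bpoly k 'X_i) /\ dvdr ('X_j + 'X_i) (Bpoly k 'X_i).
Proof.
move=> jk; rewrite /Bpoly (bigD1_seq j) ?Blower_uniq //=.
have -> : 'X_i ^+ 2 - 'X_j ^+ 2 = ('X_j - 'X_i) * - ('X_j + 'X_i) :> Cpoly n by ring.
split; apply/dvdr_mull/dvdr_mulr; first exact/dvdr_mulr/dvdrr.
exact/dvdr_mull/dvdrN/dvdrr.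
Qed.

Lemma Bsupp_up k j i : j \notin J -> (j < i)%N ->
  Bsupp k j -> (k \notin J) && Bsupp k i.
Proof.
move=> jJ ji /orP [/eqP <-|/andP [kJ kj]]; first by rewrite /Bsupp jJ ji orbT.
by rewrite /Bsupp kJ (ltn_trans kj ji) orbT.
Qed.

Lemma Bsupp_jump k j i : j \notin J -> (j < i)%N ->
  ~~ Bsupp k j -> Bsupp k i -> j \in Blower k.
Proof.
move=> jJ ji; rewrite mem_Blower jJ andbT /Bsupp negb_or => /andP [jk kj].
case/orP=> [/eqP <- //|/andP [kJ ki]].
by move: kj; rewrite kJ /= -leqNgt leq_eqVlt (inj_eq val_inj) (negbTE jk).
Qed.

Lemma Bbasis_in_Der k : in_Der (B_arr J) (Bbasis k).
Proof.
move=> _ /B_arrP [[j jJ ->] | [j [i [jJ ji [->|->]]]]];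
  rewrite /pdvd lin_polyE ?der_app_xform ?der_app_minus ?der_app_plus /Bbasis.
- case: ifP => [Sj | _]; last exact: dvdr0.
  have kJ : k \notin J by case/orP: Sj => [/eqP <- | /andP []].
  by rewrite /Bpoly (negbTE kJ); apply/dvdr_mulr/dvdrr.
- case Sj: (Bsupp k j).
    by have /andP [_ ->] := Bsupp_up jJ ji Sj; apply/dvdr_Bpoly_sub/dvdrr.
  case Si: (Bsupp k i); last by rewrite subrr; apply: dvdr0.
  rewrite sub0r; apply/dvdrN.
  by case: (dvdr_Bpoly_X i (Bsupp_jump jJ ji (negbT Sj) Si)).
- case Sj: (Bsupp k j).
    have /andP [kJ ->] := Bsupp_up jJ ji Sj.
    rewrite -[Bpoly k 'X_i]opprK -BpolyN //; apply: dvdr_Bpoly_sub.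
    by rewrite opprK; apply: dvdrr.
  case Si: (Bsupp k i); last by rewrite addr0; apply: dvdr0.
  by rewrite add0r; case: (dvdr_Bpoly_X i (Bsupp_jump jJ ji (negbT Sj) Si)).
Qed.

Definition Broots k : seq (Cpoly n) :=
  (if k \in J then [::] else [:: 0]) ++
  [seq 'X_a | a <- Blower k] ++ [seq - 'X_a | a <- Blower k].

Lemma Bpoly_diagE k : Bpoly k 'X_k = \prod_(c <- Broots k) ('X_k - c).
Proof.
rewrite /Bpoly !big_cat !big_map /= -big_split /=; congr (_ * _).
  by case: (k \in J); rewrite ?big_nil ?big_seq1 ?subr0.
by apply: eq_bigr => a _; ring.
Qed.

Lemma Broots_var_free k : {in Broots k, forall c, var_free k c}.
Proof.
move=> c; rewrite !mem_cat => /or3P [].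
- by case: (k \in J) => //; rewrite inE => /eqP ->; apply: var_free0.
- by move=> /mapP [a aB ->]; apply/var_freeX/Blower_neq.
- by move=> /mapP [a aB ->]; apply/var_freeN/var_freeX/Blower_neq.
Qed.

Lemma Broots_uniq k : uniq (Broots k).
Proof.
rewrite /Broots cat_uniq [uniq (_ ++ _)]cat_uniq (map_inj_uniq (@X_inj n)).
rewrite (map_inj_uniq (@oppX_inj n)) Blower_uniq andbT /=.
apply/and3P; split; first by case: (k \in J).
  apply/hasPn => c; rewrite mem_cat => /orP [] /mapP [a _ ->];
  by case: (k \in J); rewrite // inE ?oppr_eq0 X_neq0.
apply/hasPn => _ /mapP [b _ ->]; apply/negP => /mapP [a _ /eqP].
by rewrite eq_sym (negbTE (X_neq_oppX a b)).
Qed.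

Lemma dvdr_Bpoly_diag d k : in_Der (B_arr J) d ->
  (forall i, (i < k)%N -> d i = 0) -> dvdr (Bpoly k 'X_k) (d k).
Proof.
move=> dDer d0; rewrite Bpoly_diagE.
apply: dvdr_prod_Xsub; [exact: Broots_uniq | exact: Broots_var_free |].
move=> c; rewrite !mem_cat => /or3P [].
- case: ifPn => // kJ; rewrite inE => /eqP ->; rewrite subr0.
  by have := dDer _ (xform_in_B_arr kJ); rewrite /pdvd lin_polyE !der_app_xform.
- move=> /mapP [a]; rewrite mem_Blower => /andP [ak aJ] ->.
  have := dDer _ (minus_plus_in_B_arr aJ ak).1.
  rewrite /pdvd lin_polyE !der_app_minus d0 // sub0r => /dvdrN.
  by rewrite opprK -opprB => /dvdNr.
- move=> /mapP [a]; rewrite mem_Blower => /andP [ak aJ] ->.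
  have := dDer _ (minus_plus_in_B_arr aJ ak).2.
  by rewrite /pdvd lin_polyE !der_app_plus d0 // add0r opprK addrC.
Qed.

Lemma Bpoly_diag_neq0 k : Bpoly k 'X_k != 0.
Proof.
rewrite Bpoly_diagE prodf_seq_neq0; apply/allP => c /Broots_var_free hc.
exact: Xsub_neq0.
Qed.

Lemma Bbasis_diag k : Bbasis k k = Bpoly k 'X_k.
Proof. by rewrite /Bbasis /Bsupp eqxx. Qed.

Lemma Bbasis_lower k i : (i < k)%N -> Bbasis k i = 0.
Proof.
move=> ik; rewrite /Bbasis /Bsupp ltnNge (ltnW ik) andbF orbF.
by rewrite -(inj_eq val_inj) (ltn_eqF ik).
Qed.

Lemma Bbasis_free (c : 'I_n -> Cpoly n) :
  (forall i, \sum_(k < n) c k * Bbasis k i = 0) -> forall k, c k = 0.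
Proof.
move=> hc; suff c0 m k : (k < m)%N -> c k = 0 by move=> k; apply: (c0 n).
elim: m k => [//|m IH] k; rewrite ltnS leq_eqVlt => /orP [/eqP km|/IH //].
have := hc k; rewrite (bigD1 k) //= big1 ?addr0 => [|l lk].
  rewrite Bbasis_diag => /eqP.
  by rewrite mulf_eq0 (negbTE (Bpoly_diag_neq0 k)) orbF => /eqP.
have [kl|lk'] := ltnP k l; first by rewrite Bbasis_lower ?mulr0.
by rewrite IH ?mul0r // -km ltn_neqAle lk' andbT; exact: lk.
Qed.

Lemma Bbasis_span_vanishing m d : in_Der (B_arr J) d ->
  (forall i, (i < n - m)%N -> d i = 0) -> in_span Bbasis d.
Proof.
elim: m d => [|m IH] d dDer d0.
  exists (fun _ => 0) => i; rewrite big1 => [|k _]; last by rewrite mul0r.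
  by apply: d0; rewrite subn0.
have [nm|mn] := leqP n m.
  by apply: IH => // i; move: nm; rewrite -subn_eq0 => /eqP ->.
have kn : (n - m.+1 < n)%N by rewrite ltn_subrL ltn0Sn (leq_ltn_trans (leq0n m) mn).
pose k := Ordinal kn.
have [c0 dk] := dvdr_Bpoly_diag dDer (fun i (ik : (i < k)%N) => d0 i ik).
apply: (@in_span_subr_mul _ _ _ _ k c0); apply: IH.
  exact: in_Der_subr_mul (Bbasis_in_Der k).
move=> i im; have [ik|ki] := ltnP i k.
  by rewrite (d0 i ik) (Bbasis_lower ik) mulr0 subr0.
have -> : i = k.
  by apply/val_inj/eqP; rewrite eqn_leq ki andbT /k /= -ltnS subnSK.
by rewrite Bbasis_diag -dk subrr.
Qed.

End Basis.

Theorem mainTheorem14 (n : nat) (J : {set 'I_n}) : free_arr (B_arr J).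
Proof.
exists n, (Bbasis J); split; first exact: Bbasis_in_Der.
split; last exact: Bbasis_free.
by move=> d dDer; apply: (Bbasis_span_vanishing (m := n)) => // i; rewrite subnn.
Qed.
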